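(* Assume the input embeddings $e_1,\dots,e_N$ are orthonormal and the output embeddings $u_1,\dots,u_M$ are orthonormal. Let $W_t$ solve the gradient flow $\dot W_t=-\nabla\mathcal{L}(W_t)$ from an arbitrary $W_0$, and write $w_i(t)=u_i^\top W_t e_x$ for a fixed $x\in[N]$. Then for all $i,j\in[M]\setminus\{f^*(x)\}$ the quantity $\exp(-w_i(t))-\exp(-w_j(t))$ is constant in $t$, and $\sum_{i\in[M]}w_i(t)$ is constant in $t$.
   Context: Integers $N,M\ge2$, $d\ge\max(N,M)$. Fixed embeddings $e_1,\dots,e_N,u_1,\dots,u_M\in\mathbb{R}^d$, target $f^*:[N]\to[M]$, probability distribution $p$ on $[N]$. For $W\in\mathbb{R}^{d\times d}$: $p_W(y\mid x)=\exp(u_y^\top We_x)/\sum_{z\in[M]}\exp(u_z^\top We_x)$, $\mathcal{L}(W)=-\sum_x p(x)\log p_W(f^*(x)\mid x)$. Gradients are for the Frobenius inner product. *)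

From HB Require Import structures.
From mathcomp Require Import all_boot all_order all_algebra.
From mathcomp Require Import all_classical all_reals all_analysis.
Set Implicit Arguments. Unset Strict Implicit. Unset Printing Implicit Defensive.
Import Order.TTheory GRing.Theory Num.Theory.
Import numFieldNormedType.Exports.
Local Open Scope ring_scope.
Local Open Scope classical_set_scope.

Section Defs.
Variables (R : realType) (N M d : nat).
Variables (e : 'I_N -> 'cV[R]_d) (u : 'I_M -> 'cV[R]_d).
Variables (fstar : 'I_N -> 'I_M) (p : 'I_N -> R).

Definition logit (W : 'M[R]_d) (y : 'I_M) (x : 'I_N) : R :=
  ((u y)^T *m W *m e x) 0 0.

Definition pW (W : 'M[R]_d) (y : 'I_M) (x : 'I_N) : R :=
  expR (logit W y x) / \sum_(z < M) expR (logit W z x).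

Definition loss (W : 'M[R]_d) : R :=
  - \sum_(x < N) p x * ln (pW W (fstar x) x).
End Defs.

Definition frob (R : realType) (m n : nat) (A B : 'M[R]_(m, n)) : R :=
  \sum_(i < m) \sum_(j < n) A i j * B i j.

Definition is_gradient (R : realType) (m n : nat)
  (L : 'M[R]_(m, n) -> R) (W G : 'M[R]_(m, n)) : Prop :=
  differentiable L W /\ forall V, 'd L W V = frob G V.

Definition orthonormal_family (R : realType) (k d : nat) (v : 'I_k -> 'cV[R]_d) : Prop :=
  forall i j, ((v i)^T *m v j) 0 0 = (i == j)%:R.

(* With orthonormal embeddings the direction u_i e_x^T moves only the logit
   w_i = u_i^T W e_x, so the gradient flow gives
   w_i' = p(x) (1[i = f*(x)] - p_W(i | x)).  For i <> f*(x) this yields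
   (exp(-w_i))' = p(x) exp(-w_i) p_W(i | x) = p(x) / sum_z exp(w_z), the same
   for every such i, while sum_i w_i' = p(x) (1 - sum_i p_W(i | x)) = 0.
   Continuity at t = 0 and the mean value theorem turn these vanishing
   derivatives into constancy on [0, +oo[. *)

From HB Require Import structures.
From mathcomp Require Import all_boot all_order all_algebra.
From mathcomp Require Import all_classical all_reals all_analysis.
From mathcomp Require Import ring.
Set Implicit Arguments. Unset Strict Implicit. Unset Printing Implicit Defensive.
Import Order.TTheory GRing.Theory Num.Theory.
Import numFieldNormedType.Exports.
Local Open Scope ring_scope.
Local Open Scope classical_set_scope.

Section Calculus.
Variable R : realType.

Lemma continuous_sumr (T : topologicalType) n (f : 'I_n -> T -> R) :
  (forall i, continuous (f i)) -> continuous (fun y => \sum_i f i y).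
Proof.
move=> fc; rewrite -fct_sumE.
apply: (big_ind (fun g : T -> R => continuous g)) => //; first exact: cst_continuous.
by move=> g h gc hc z; exact: (@continuousD R R^o T g h z (gc z) (hc z)).
Qed.

Lemma is_derive_sumr n (h : 'I_n -> R -> R) (t : R) (dh : 'I_n -> R) :
  (forall i, is_derive t 1 (h i) (dh i)) ->
  is_derive t 1 (fun s => \sum_i h i s) (\sum_i dh i).
Proof. by move=> hd; rewrite -fct_sumE; apply: is_derive_sum. Qed.

Lemma frob_continuous m n (A : 'M[R]_(m, n)) : continuous (fun W => frob W A).
Proof.
apply: continuous_sumr => i; apply: continuous_sumr => j W.
by apply: continuousM; [exact: coord_continuous | exact: cst_continuous].
Qed.

Lemma is_derive_frob m n (W : R -> 'M[R]_(m, n)) (A : 'M[R]_(m, n)) t :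
  derivable W t 1 -> is_derive t 1 (fun s => frob (W s) A) (frob ('D_1 W t) A).
Proof.
move=> dW; apply: is_derive_sumr => i; apply: is_derive_sumr => j.
have dWij : is_derive t 1 (fun s => W s i j) ('D_1 W t i j).
  by apply: DeriveDef; [move/derivable_mxP: dW | rewrite (derive_mx dW) mxE].
apply: (is_derive_eq (is_deriveM dWij (is_derive_cst (A i j) t 1))).
by rewrite /GRing.scale /=; ring.
Qed.

Lemma frobNl m n (A B : 'M[R]_(m, n)) : frob (- A) B = - frob A B.
Proof.
rewrite /frob -sumrN; apply: eq_bigr => i _; rewrite -sumrN.
by apply: eq_bigr => j _; rewrite mxE mulNr.
Qed.

Lemma derive_line (V W : normedModType R) (f : V -> W) (a v : V) :
  'D_v f a = 'D_1 (fun h : R => f (h *: v + a)) 0.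
Proof.
rewrite /derive; congr lim; apply: (congr1 (fmap^~ _)); apply/funext => h /=.
by rewrite scale0r add0r addr0 [h%:A]mulr1.
Qed.

Lemma gradient_line m n (L : 'M[R]_(m, n) -> R) (W G V : 'M[R]_(m, n)) :
  is_gradient L W G -> frob G V = 'D_1 (fun h : R => L (h *: V + W)) 0.
Proof. by case=> dL dLE; rewrite -dLE -deriveE // derive_line. Qed.

Lemma is_derive0_cst_ge0 (f : R -> R) :
  {within `[0, +oo[, continuous f} -> (forall s : R, 0 < s -> is_derive s 1 f 0) ->
  forall t : R, 0 <= t -> f t = f 0.
Proof.
move=> fc fd t t0.
have fd' (s : R) : s \in `]0, t[%R -> is_derive s 1 f 0.
  by move=> st; apply: fd; rewrite (itvP st).
have fc' : {within `[0, t], continuous f}.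
  by apply: continuous_subspaceW fc => s; rewrite /= !in_itv /= => /andP[-> _].
have [c _] := MVT_segment t0 fd' fc'.
by rewrite mul0r => /eqP; rewrite subr_eq0 => /eqP.
Qed.

Lemma sumr_expR_gt0 n (a : 'I_n -> R) : (0 < n)%N -> 0 < \sum_z expR (a z).
Proof.
case: n a => // n a _; rewrite big_ord_recl; apply: ltr_pwDl; first exact: expR_gt0.
by apply: sumr_ge0 => z _; apply/ltW/expR_gt0.
Qed.

Lemma is_derive_affine (t c k : R) : is_derive t 1 (fun h => h * c + k) c.
Proof.
apply: (is_derive_eq (is_deriveD (is_deriveM (is_derive_id t 1) (is_derive_cst c t 1))
  (is_derive_cst k t 1))).
by rewrite /GRing.scale /=; ring.
Qed.

Lemma is_derive0_ln_sum_expR n (a b : 'I_n -> R) : (0 < n)%N ->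
  is_derive (0 : R) 1 (fun h : R => ln (\sum_z expR (h * b z + a z)))
    ((\sum_z b z * expR (a z)) / \sum_z expR (a z)).
Proof.
move=> n0.
have dS : is_derive (0 : R) 1 (fun h : R => \sum_z expR (h * b z + a z))
                    (\sum_z b z * expR (a z)).
  apply: is_derive_sumr => z.
  have := is_derive1_comp (is_derive_expR _) (is_derive_affine 0 (b z) (a z)).
  by rewrite mul0r add0r mulrC.
have S0 : 0 < \sum_z expR (0 * b z + a z) by exact: sumr_expR_gt0.
apply: (is_derive_eq (is_derive1_comp (is_derive1_ln S0) dS)).
suff -> : \sum_z expR (0 * b z + a z) = \sum_z expR (a z) by rewrite mulrC.
by apply: eq_bigr => z _; rewrite mul0r add0r.
Qed.

End Calculus.

Section Logits.
Variables (R : realType) (N M d : nat) (e : 'I_N -> 'cV[R]_d) (u : 'I_M -> 'cV[R]_d).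

Lemma logit_frob W y x : logit e u W y x = frob W (u y *m (e x)^T).
Proof.
rewrite /logit /frob mxE; under eq_bigr => b _ do rewrite mxE big_distrl /=.
rewrite exchange_big; apply: eq_bigr => a _; apply: eq_bigr => b _.
by rewrite !mxE big_ord1 !mxE; ring.
Qed.

Lemma logit_continuous y x : continuous (fun W => logit e u W y x).
Proof.
have -> : (fun W => logit e u W y x) = fun W => frob W (u y *m (e x)^T).
  by apply/funext => W; rewrite logit_frob.
exact: frob_continuous.
Qed.

Lemma expRN_logit_continuous y x : continuous (fun W => expR (- logit e u W y x)).
Proof.
move=> W; apply: (continuous_comp (f := fun W => - logit e u W y x)).
  exact/continuousN/logit_continuous.
exact: continuous_expR.
Qed.

Lemma is_derive_logit (W : R -> 'M[R]_d) t y x : derivable W t 1 ->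
  is_derive t 1 (fun s => logit e u (W s) y x) (logit e u ('D_1 W t) y x).
Proof.
have -> : (fun s => logit e u (W s) y x) = fun s => frob (W s) (u y *m (e x)^T).
  by apply/funext => s; rewrite logit_frob.
by rewrite logit_frob; apply: is_derive_frob.
Qed.

Lemma logitN W y x : logit e u (- W) y x = - logit e u W y x.
Proof. by rewrite !logit_frob frobNl. Qed.

Lemma sum_pW W x : (0 < M)%N -> \sum_y pW e u W y x = 1.
Proof.
by move=> M0; rewrite /pW -mulr_suml divff // lt0r_neq0 // sumr_expR_gt0.
Qed.

Lemma expRN_logit_pW W y x :
  expR (- logit e u W y x) * pW e u W y x = (\sum_z expR (logit e u W z x))^-1.
Proof. by rewrite /pW mulrA expRN mulVf ?mul1r // gt_eqF ?expR_gt0. Qed.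

End Logits.

Section OrthonormalEmbeddings.
Variables (R : realType) (N M d : nat) (e : 'I_N -> 'cV[R]_d) (u : 'I_M -> 'cV[R]_d).
Variables (fstar : 'I_N -> 'I_M) (p : 'I_N -> R).
Hypotheses (he : orthonormal_family e) (hu : orthonormal_family u).

Lemma logit_line W i x (h : R) y x' :
  logit e u (h *: (u i *m (e x)^T) + W) y x' =
  h * ((y == i)%:R * (x == x')%:R) + logit e u W y x'.
Proof.
rewrite /logit mulmxDr mulmxDl mxE; congr (_ + _).
rewrite -scalemxAr -scalemxAl mxE !mulmxA -(mulmxA _ (u i)) -mulmxA.
by rewrite -(mulmxA (u i)) mulmxA mxE big_ord1 hu he.
Qed.

Lemma loss_logit W : (0 < M)%N -> loss e u fstar p W =
  - \sum_x p x * (logit e u W (fstar x) x - ln (\sum_z expR (logit e u W z x))).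
Proof.
move=> M0; rewrite /loss; congr (- _); apply: eq_bigr => x _; congr (_ * _).
by rewrite /pW ln_div ?expRK // posrE ?expR_gt0 ?sumr_expR_gt0.
Qed.

Lemma gradient_logit W G i x : (0 < M)%N -> is_gradient (loss e u fstar p) W G ->
  logit e u G i x = p x * (pW e u W i x - (fstar x == i)%:R).
Proof.
move=> M0 hG; rewrite logit_frob (gradient_line (u i *m (e x)^T) hG).
pose c x' : R := (fstar x' == i)%:R * (x == x')%:R.
pose b x' z : R := (z == i)%:R * (x == x')%:R.
pose g h := - \sum_x' p x' * ((h * c x' + logit e u W (fstar x') x')
                - ln (\sum_z expR (h * b x' z + logit e u W z x'))).
have -> : (fun h => loss e u fstar p (h *: (u i *m (e x)^T) + W)) = g.
  apply/funext => h; rewrite loss_logit //; congr (- _); apply: eq_bigr => x' _.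
  by rewrite logit_line; under eq_bigr do rewrite logit_line.
have dg : is_derive (0 : R) 1 g (- \sum_x' p x' * (c x' -
    (\sum_z b x' z * expR (logit e u W z x')) / \sum_z expR (logit e u W z x'))).
  apply: is_deriveN; apply: is_derive_sumr => x'; apply: is_deriveZ.
  exact: is_deriveB (is_derive_affine _ _ _) (is_derive0_ln_sum_expR _ _ M0).
rewrite derive_val (bigD1 x) //= [X in _ + X]big1 ?addr0; last first.
  move=> x' x'x; have {x'x} xx' : (x == x') = false by rewrite eq_sym (negbTE x'x).
  rewrite /c /b xx' mulr0 big1 ?mul0r ?subr0 ?mulr0 // => z _.
  by rewrite mulr0 mul0r.
rewrite /c /b eqxx (bigD1 i) //= big1 ?addr0; last by move=> z /negbTE ->; rewrite !mul0r.
by rewrite /pW eqxx !mulr1 mul1r; ring.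
Qed.

End OrthonormalEmbeddings.

Section GradientFlow.
Variables (R : realType) (N M d : nat) (e : 'I_N -> 'cV[R]_d) (u : 'I_M -> 'cV[R]_d).
Variables (fstar : 'I_N -> 'I_M) (p : 'I_N -> R).
Hypotheses (he : orthonormal_family e) (hu : orthonormal_family u) (M0 : (0 < M)%N).
Variable W : R -> 'M[R]_d.
Hypothesis hWc : {within `[0, +oo[, continuous W}.
Hypothesis hflow : forall t : R, 0 < t ->
  exists G : 'M[R]_d,
    is_gradient (loss e u fstar p) (W t) G /\ derivable W t 1 /\ 'D_1 W t = - G.
Variable x : 'I_N.

Lemma flow_continuous (F : 'M[R]_d -> R) :
  continuous F -> {within `[0, +oo[, continuous (fun t => F (W t))}.
Proof. by move=> Fc t; exact: (continuous_comp (@hWc t) (Fc _)). Qed.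

Lemma is_derive_logit_flow (i : 'I_M) (s : R) : 0 < s ->
  is_derive s 1 (fun t => logit e u (W t) i x)
    (p x * ((fstar x == i)%:R - pW e u (W s) i x)).
Proof.
move=> s0; have [G [hG [dW DW]]] := hflow s0.
apply: (is_derive_eq (is_derive_logit e u i x dW)).
by rewrite DW logitN (gradient_logit he hu _ _ M0 hG) mulrBr opprB mulrBr.
Qed.

Lemma is_derive_expRN_logit_flow (i : 'I_M) (s : R) : i != fstar x -> 0 < s ->
  is_derive s 1 (fun t => expR (- logit e u (W t) i x))
    (p x / \sum_z expR (logit e u (W s) z x)).
Proof.
move=> ix s0.
apply: (is_derive_eq (is_derive1_comp (is_derive_expR _) (is_deriveN (is_derive_logit_flow i s0)))).
by rewrite eq_sym (negbTE ix) (_ : false%:R = 0 :> R) // sub0r !mulrN opprK /= mulrCA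
  expRN_logit_pW.
Qed.

Lemma is_derive_sum_logit_flow (s : R) : 0 < s ->
  is_derive s 1 (fun t => \sum_i logit e u (W t) i x) 0.
Proof.
move=> s0; apply: (is_derive_eq (is_derive_sumr (fun i => is_derive_logit_flow i s0))).
rewrite -mulr_sumr sumrB sum_pW // (bigD1 (fstar x)) //= eqxx big1 ?addr0 ?subrr ?mulr0 //.
by move=> i /negbTE; rewrite eq_sym => ->.
Qed.

End GradientFlow.

Theorem mainTheorem4 (R : realType) (N M d : nat)
  (hN : (2 <= N)%N) (hM : (2 <= M)%N) (hd : (maxn N M <= d)%N)
  (e : 'I_N -> 'cV[R]_d) (u : 'I_M -> 'cV[R]_d)
  (fstar : 'I_N -> 'I_M) (p : 'I_N -> R)
  (hp0 : forall x, 0 <= p x) (hp1 : \sum_(x < N) p x = 1)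
  (he : orthonormal_family e) (hu : orthonormal_family u)
  (W : R -> 'M[R]_d)
  (hWc : {within `[0, +oo[, continuous W})
  (hflow : forall t : R, 0 < t ->
     exists G : 'M[R]_d,
       is_gradient (loss e u fstar p) (W t) G /\
       derivable W t 1 /\ 'D_1 W t = - G)
  (x : 'I_N) :
  (forall i j : 'I_M, i != fstar x -> j != fstar x -> forall t : R, 0 <= t ->
     expR (- logit e u (W t) i x) - expR (- logit e u (W t) j x) =
     expR (- logit e u (W 0) i x) - expR (- logit e u (W 0) j x)) /\
  (forall t : R, 0 <= t ->
     \sum_(i < M) logit e u (W t) i x = \sum_(i < M) logit e u (W 0) i x).
Proof.
have M0 : (0 < M)%N by apply: leq_trans hM.
split.
- move=> i j ix jx.
  apply: is_derive0_cst_ge0.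
    apply: (flow_continuous hWc
      (F := fun V => expR (- logit e u V i x) - expR (- logit e u V j x))).
    move=> V; apply: (continuousB (f := fun V => expR (- logit e u V i x))
                                  (g := fun V => expR (- logit e u V j x)));
      exact: expRN_logit_continuous.
  move=> s s0; apply: (is_derive_eq (is_deriveB
    (is_derive_expRN_logit_flow he hu M0 hflow ix s0)
    (is_derive_expRN_logit_flow he hu M0 hflow jx s0))).
  exact: subrr.
- apply: is_derive0_cst_ge0.
    apply: (flow_continuous hWc (F := fun V => \sum_i logit e u V i x)).
    by apply: continuous_sumr => i; apply: logit_continuous.
  by move=> s s0; exact: (is_derive_sum_logit_flow he hu M0 hflow x s0).
Qed.
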